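(* Let $S$ be a nonempty set of primes and $(a_n(q))_{n\ge1}$ a sequence in $\mathbb{Z}[q]$. Then $a_{p^rm}(q)\equiv a_{p^{r-1}m}(q^p)\pmod{[p^r]_{q^m}}$ holds for all primes $p\in S$ and all integers $m,r\ge1$ with $p\nmid m$ if and only if $\sum_{d\mid n}\mu(d)\,a_{nm/d}(q^d)\equiv0\pmod{[n]_{q^m}}$ for all integers $n\ge1$ divisible only by primes from $S$ and all integers $m\ge1$ coprime to $n$.
   Context: $\mu$ is the Möbius function and $[n]_{q^m}=1+q^m+q^{2m}+\dots+q^{m(n-1)}$; polynomial congruences modulo such polynomials mean divisibility of the difference in $\mathbb{Z}[q]$. *)

From HB Require Import structures.
From mathcomp Require Import all_boot all_order all_algebra.
Set Implicit Arguments. Unset Strict Implicit. Unset Printing Implicit Defensive.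
Import Order.TTheory GRing.Theory Num.Theory.
Local Open Scope ring_scope.

(* Möbius function: (-1)^k if n is a product of k distinct primes, 0 if n has
   a square factor; mobius 0 = 0 by convention (never used). *)
Definition mobius (n : nat) : int :=
  if n == 0%N then 0
  else if all (fun p => logn p n == 1%N) (primes n)
       then (-1) ^+ size (primes n) else 0.

(* q-integer [n]_{q^m} = 1 + q^m + ... + q^{m(n-1)} in Z[q]. *)
Definition qint (n m : nat) : {poly int} := \sum_(i < n) 'X^(m * i).

Definition zpdvd (g f : {poly int}) : Prop := exists c : {poly int}, f = c * g.

Definition subsq (f : {poly int}) (d : nat) : {poly int} := f \Po 'X^d.

(* Both conditions are tested at complex roots of unity: [n]_{q^m} equals
   (q^{nm} - 1) / (q^m - 1), a monic polynomial whose roots are the simple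
   roots z with z^{nm} = 1 and z^m <> 1, so an integer polynomial is divisible
   by it iff it vanishes at all these z.  For such a z, some prime p | n
   divides the order of z.  Pairing every divisor d of n = p^r e d prime to p
   with p d, the Möbius sum at z becomes a sum of the terms
   mu(d) (a_{p^r e m}(z^d) - a_{p^{r-1} e m}((z^d)^p)), and each of them
   vanishes by the congruence for p at the root z^d of [p^r]_{q^{em}}.
   Conversely, for n = p^r only d = 1 and d = p contribute, and the Möbius sum
   is exactly a_{p^r m}(q) - a_{p^{r-1} m}(q^p). *)

From HB Require Import structures.
From mathcomp Require Import all_boot all_order all_algebra algC cyclotomic.
From mathcomp Require Import zify.
Set Implicit Arguments. Unset Strict Implicit. Unset Printing Implicit Defensive.
Import Order.TTheory GRing.Theory Num.Theory.
Local Open Scope ring_scope.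

Lemma qint_mul_Xn_sub1 n m : qint n m * ('X^m - 1) = 'X^(n * m) - 1.
Proof.
rewrite mulrC /qint [(n * m)%N]mulnC exprM [RHS]subrX1; congr (_ * _).
by apply: eq_bigr => i _; rewrite -exprM.
Qed.

Lemma qint_monic n m : (0 < n)%N -> (0 < m)%N -> qint n m \is monic.
Proof.
move=> n_gt0 m_gt0; have nm_gt0 : (0 < n * m)%N by rewrite muln_gt0 n_gt0.
have := monicXnsubC (1 : int) nm_gt0.
by rewrite -qint_mul_Xn_sub1 monicMr // monicXnsubC.
Qed.

Lemma Xn_sub1_dvdp (F : fieldType) N (w : F) (p : {poly F}) :
  N.-primitive_root w -> (forall z, z ^+ N = 1 -> root p z) -> 'X^N - 1 %| p.
Proof.
move=> w_prim p_roots; rewrite -(factor_Xn_sub_1 w_prim).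
rewrite -(big_map (fun i => w ^+ i) xpredT (fun z => 'X - z%:P)).
apply: uniq_roots_dvdp.
  apply/allP => _ /mapP [i _ ->]; apply: p_roots.
  by rewrite exprAC (prim_expr_order w_prim) expr1n.
rewrite uniq_rootsE map_inj_in_uniq ?iota_uniq // => i j.
rewrite !mem_index_iota => /andP [_ lt_i_N] /andP [_ lt_j_N] /eqP.
by rewrite (eq_prim_root_expr w_prim) !modn_small // => /eqP.
Qed.

Lemma zpdvd_monicP (F : numFieldType) (g f : {poly int}) : g \is monic ->
  reflect (zpdvd g f) (map_poly (intr : int -> F) g %| map_poly intr f).
Proof.
move=> g_monic.
have map_ratr (h : {poly int}) :
    map_poly (intr : int -> F) h =
    map_poly ratr (map_poly (intr : int -> rat) h).
  by rewrite -map_poly_comp; apply: eq_map_poly => x /=; rewrite ratr_int.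
rewrite !map_ratr dvdp_map dvdp_rat_int.
exact: (iffP (Pdiv.IdomainMonic.dvdpP g_monic _)).
Qed.

Definition evalC (z : algC) : {rmorphism {poly int} -> algC} :=
  horner_eval z \o map_poly intr.

Lemma evalC_Xn z k : evalC z 'X^k = z ^+ k.
Proof. by rewrite /evalC /= horner_evalE map_polyXn hornerXn. Qed.

Lemma evalC_polyC z c : evalC z c%:P = c%:~R.
Proof. by rewrite /evalC /= horner_evalE map_polyC hornerC. Qed.

Lemma evalC_subsq z f d : evalC z (subsq f d) = evalC (z ^+ d) f.
Proof.
rewrite /evalC /= horner_evalE /subsq map_comp_poly map_polyXn.
by rewrite horner_comp hornerXn.
Qed.

Lemma evalC_qint z n m :
  z ^+ (n * m) = 1 -> z ^+ m != 1 -> evalC z (qint n m) = 0.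
Proof.
move=> z_nm z_m; have /eqP := congr1 (evalC z) (qint_mul_Xn_sub1 n m).
rewrite rmorphM !rmorphB rmorph1 !evalC_Xn z_nm subrr mulf_eq0.
by rewrite subr_eq0 (negbTE z_m) orbF => /eqP.
Qed.

Lemma zpdvd_qintP n m f : (0 < n)%N -> (0 < m)%N ->
  zpdvd (qint n m) f <->
  (forall z, z ^+ (n * m) = 1 -> z ^+ m != 1 -> evalC z f = 0).
Proof.
move=> n_gt0 m_gt0; split=> [[c ->] z z_nm z_m | f_roots].
  by rewrite rmorphM evalC_qint // mulr0.
have [w w_prim] : {w : algC | (n * m).-primitive_root w}.
  by apply: C_prim_root_exists; rewrite muln_gt0 n_gt0.
apply/(zpdvd_monicP algC _ (qint_monic n_gt0 m_gt0)).
have Xm_neq0 : ('X^m - 1 : {poly algC}) != 0 by rewrite monic_neq0 ?monicXnsubC.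
rewrite -(dvdp_mul2r _ _ Xm_neq0).
have := congr1 (map_poly (intr : int -> algC)) (qint_mul_Xn_sub1 n m).
rewrite rmorphM !rmorphB rmorph1 /= !map_polyXn => ->.
apply: (Xn_sub1_dvdp w_prim) => z z_nm; rewrite rootM.
have [z_m | z_m] := eqVneq (z ^+ m) 1.
  by rewrite orbC rootE !hornerE z_m subrr eqxx.
by apply/orP; left; apply/eqP; apply: f_roots.
Qed.

Lemma mobius_sq p d : prime p -> (p ^ 2 %| d)%N -> mobius d = 0.
Proof.
move=> p_prime p2_dvd_d; have [-> // | d_gt0] := posnP d.
rewrite /mobius gtn_eqF //; case: allP => // /(_ p) logn_p.
have p_dvd_d : (p %| d)%N by apply: dvdn_trans p2_dvd_d; rewrite dvdn_exp.
move: p2_dvd_d; rewrite pfactor_dvdn // (eqP (logn_p _)) //.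
by rewrite mem_primes p_prime d_gt0.
Qed.

Lemma mobius_pmul p d : prime p -> ~~ (p %| d)%N -> mobius (p * d) = - mobius d.
Proof.
move=> p_prime p_ndvd_d.
have d_gt0 : (0 < d)%N by case: d p_ndvd_d; rewrite ?dvdn0.
have p_gt0 := prime_gt0 p_prime.
have primes_pd : perm_eq (primes (p * d)) (p :: primes d).
  apply: uniq_perm; rewrite ?primes_uniq //=.
    by rewrite primes_uniq mem_primes (negbTE p_ndvd_d) !andbF.
  by move=> q; rewrite primesM // primes_prime // !inE.
have logn_pd q : q \in primes d -> logn q (p * d) = logn q d.
  rewrite mem_primes => /and3P [q_prime _ q_dvd_d].
  rewrite lognM // logn_prime //; case: eqP => // q_p.
  by move: p_ndvd_d; rewrite -q_p q_dvd_d.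
rewrite /mobius !gtn_eqF ?muln_gt0 ?p_gt0 //.
rewrite (perm_all _ primes_pd) (perm_size primes_pd) /= lognM //.
rewrite logn_prime // eqxx (logn_coprime (_ : coprime p d)) ?prime_coprime //.
rewrite (eq_in_all (a2 := fun q => logn q d == 1%N)) => [|q /logn_pd -> //].
by case: all; rewrite ?oppr0 // exprS mulN1r.
Qed.

Lemma perm_divisors_pmul p n : prime p -> (p %| n)%N -> (0 < n)%N ->
  perm_eq [seq d <- divisors n | (p %| d) && ~~ (p ^ 2 %| d)]%N
          [seq (p * d)%N | d <- divisors n & ~~ (p %| d)%N].
Proof.
move=> p_prime p_dvd_n n_gt0; have p_gt0 := prime_gt0 p_prime.
apply: uniq_perm; rewrite ?filter_uniq ?divisors_uniq //.
  rewrite map_inj_uniq ?filter_uniq ?divisors_uniq // => i j /eqP.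
  by rewrite eqn_pmul2l // => /eqP.
move=> x; rewrite mem_filter -dvdn_divisors //.
apply/andP/mapP => [[/andP [p_dvd_x p2_ndvd_x] x_dvd_n] | [d]].
  have x_eq : x = (p * (x %/ p))%N by rewrite mulnC divnK.
  exists (x %/ p)%N => //; rewrite mem_filter -dvdn_divisors //.
  rewrite (dvdn_trans _ x_dvd_n) ?andbT; last by rewrite {2}x_eq dvdn_mull.
  by apply: contra p2_ndvd_x; rewrite {2}x_eq expnS expn1 dvdn_pmul2l.
rewrite mem_filter -dvdn_divisors // => /andP [p_ndvd_d d_dvd_n] ->.
rewrite Gauss_dvd ?prime_coprime // dvdn_mulr //= p_dvd_n d_dvd_n.
by rewrite expnS expn1 dvdn_pmul2l.
Qed.

Lemma big_divisors_pmul (V : zmodType) p n (F : nat -> V) :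
    prime p -> (p %| n)%N -> (0 < n)%N ->
    (forall d, (p ^ 2 %| d)%N -> F d = 0) ->
  \sum_(d <- divisors n) F d =
  \sum_(d <- divisors n | ~~ (p %| d)%N) (F d + F (p * d)%N).
Proof.
move=> p_prime p_dvd_n n_gt0 F_p2.
rewrite (bigID (dvdn p)) /= addrC big_split /=; congr (_ + _).
rewrite (bigID (fun d => p ^ 2 %| d)%N) /= big1 ?add0r; last first.
  by move=> d /andP [_ /F_p2].
rewrite -big_filter (perm_big _ (perm_divisors_pmul p_prime p_dvd_n n_gt0)).
by rewrite big_map big_filter.
Qed.

Lemma pfactor_coprime_divisor p r d :
  prime p -> (d %| p ^ r)%N -> ~~ (p %| d)%N -> d = 1%N.
Proof.
move=> p_prime /(dvdn_pfactor _ _ p_prime) [[|k] _ ->] //.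
by rewrite expnS dvdn_mulr.
Qed.

Definition mobius_sum (a : nat -> {poly int}) (n m : nat) : {poly int} :=
  \sum_(d <- divisors n) (mobius d)%:P * subsq (a (n * m %/ d)%N) d.

Lemma mobius_sum_pfactor a p r m : prime p -> (0 < r)%N ->
  mobius_sum a (p ^ r) m = a (p ^ r * m)%N - subsq (a (p ^ r.-1 * m)%N) p.
Proof.
move=> p_prime r_gt0; have p_gt0 := prime_gt0 p_prime.
rewrite /mobius_sum (@big_divisors_pmul _ p) ?dvdn_exp ?expn_gt0 ?p_gt0 //;
  last by move=> d /(mobius_sq p_prime) ->; rewrite mul0r.
rewrite -big_filter.
have -> : [seq d <- divisors (p ^ r) | ~~ (p %| d)%N] = [:: 1%N].
  apply: (irr_sorted_eq ltn_trans ltnn); last move=> d.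
  - by apply: sorted_filter; [exact: ltn_trans | exact: sorted_divisors_ltn].
  - by [].
  rewrite mem_filter -dvdn_divisors ?expn_gt0 ?p_gt0 // inE.
  apply/andP/eqP => [[p_ndvd_d d_dvd] | ->].
    exact: pfactor_coprime_divisor d_dvd p_ndvd_d.
  by rewrite dvd1n dvdn1 neq_ltn prime_gt1 ?orbT.
rewrite big_cons big_nil addr0 mobius_pmul ?dvdn1 ?neq_ltn ?prime_gt1 ?orbT //.
rewrite muln1 divn1.
have -> : (p ^ r * m %/ p = p ^ r.-1 * m)%N.
  by rewrite -(prednK r_gt0) expnS -mulnA mulKn.
have -> : mobius 1 = 1 by [].
by rewrite polyCN mulNr !mul1r /subsq expr1 comp_polyXr.
Qed.

Definition dwork_congruences (S : nat -> Prop) (a : nat -> {poly int}) : Prop :=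
  forall p m r : nat, S p -> (0 < m)%N -> (0 < r)%N -> ~~ (p %| m)%N ->
    zpdvd (qint (p ^ r) m) (a (p ^ r * m)%N - subsq (a (p ^ r.-1 * m)%N) p).

Definition mobius_congruences (S : nat -> Prop) (a : nat -> {poly int}) :
    Prop :=
  forall n m : nat, (0 < n)%N -> (forall p, prime p -> (p %| n)%N -> S p) ->
    (0 < m)%N -> coprime n m -> zpdvd (qint n m) (mobius_sum a n m).

Lemma dwork_of_mobius S a :
  (forall p, S p -> prime p) -> mobius_congruences S a -> dwork_congruences S a.
Proof.
move=> S_prime mobius_cong p m r Sp m_gt0 r_gt0 p_ndvd_m.
have p_prime := S_prime p Sp.
rewrite -mobius_sum_pfactor //; apply: mobius_cong => //.
- by rewrite expn_gt0 prime_gt0.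
- move=> q q_prime; rewrite Euclid_dvdX // => /andP [q_dvd_p _].
  by move: q_dvd_p; rewrite dvdn_prime2 // => /eqP ->.
- by rewrite coprimeXl // prime_coprime.
Qed.

Lemma prime_dvdn_order (R : idomainType) (z : R) n m :
    (0 < n)%N -> z ^+ (n * m) = 1 -> z ^+ m != 1 ->
  exists p, [/\ prime p, (p %| n)%N & forall j, z ^+ j = 1 -> (p %| j)%N].
Proof.
move=> n_gt0 z_nm z_m.
have m_gt0 : (0 < m)%N by case: (posnP m) z_m => // ->; rewrite expr0 eqxx.
have nm_gt0 : (0 < n * m)%N by rewrite muln_gt0 n_gt0.
have [k z_prim _] := prim_order_exists nm_gt0 z_nm.
have k_ndvd_m : ~~ (k %| m)%N by rewrite (prim_order_dvd z_prim).
have gcd_gt1 : (1 < gcdn k n)%N.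
  rewrite ltnNge; apply: contra k_ndvd_m => gcd_le1.
  have k_cop_n : coprime k n.
    by rewrite /coprime eqn_leq gcd_le1 gcdn_gt0 n_gt0 orbT.
  by rewrite -(Gauss_dvdr _ k_cop_n) (prim_order_dvd z_prim) z_nm.
exists (pdiv (gcdn k n)); split; first exact: pdiv_prime.
  exact: dvdn_trans (pdiv_dvd _) (dvdn_gcdr _ _).
move=> j /eqP; rewrite -(prim_order_dvd z_prim); apply: dvdn_trans.
exact: dvdn_trans (pdiv_dvd _) (dvdn_gcdl _ _).
Qed.

Lemma dwork_congruence_eval S a p m r w :
    dwork_congruences S a -> S p -> prime p -> (0 < m)%N -> (0 < r)%N ->
    ~~ (p %| m)%N -> w ^+ (p ^ r * m) = 1 -> w ^+ m != 1 ->
  evalC w (a (p ^ r * m)%N) = evalC (w ^+ p) (a (p ^ r.-1 * m)%N).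
Proof.
move=> dwork Sp p_prime m_gt0 r_gt0 p_ndvd_m w_1 w_m.
have pr_gt0 : (0 < p ^ r)%N by rewrite expn_gt0 prime_gt0.
apply/eqP; rewrite -subr_eq0 -evalC_subsq -rmorphB; apply/eqP.
have := dwork p m r Sp m_gt0 r_gt0 p_ndvd_m.
by move/(zpdvd_qintP _ pr_gt0 m_gt0); apply.
Qed.

Lemma mobius_sum_eval S a n m z :
    dwork_congruences S a -> (0 < n)%N ->
    (forall p, prime p -> (p %| n)%N -> S p) -> coprime n m ->
    z ^+ (n * m) = 1 -> z ^+ m != 1 ->
  evalC z (mobius_sum a n m) = 0.
Proof.
move=> dwork n_gt0 S_n n_cop_m z_nm z_m.
have [p [p_prime p_dvd_n p_dvd_order]] := prime_dvdn_order n_gt0 z_nm z_m.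
have p_ndvd_m : ~~ (p %| m)%N.
  by rewrite -prime_coprime // (coprime_dvdl p_dvd_n n_cop_m).
have [n' p_cop_n' n_eq] := pfactor_coprime p_prime n_gt0.
set r := logn p n in n_eq.
have r_gt0 : (0 < r)%N by rewrite logn_gt0 mem_primes p_prime n_gt0 p_dvd_n.
rewrite rmorph_sum (big_divisors_pmul p_prime p_dvd_n n_gt0); last first.
  by move=> d /(mobius_sq p_prime) ->; rewrite mul0r rmorph0.
apply: big1_seq => d /andP [p_ndvd_d]; rewrite -dvdn_divisors // => d_dvd_n.
have d_dvd_n' : (d %| n')%N.
  rewrite -(@Gauss_dvdl _ _ (p ^ r)) -?n_eq //.
  by rewrite coprimeXr // coprime_sym prime_coprime.
set e := (n' %/ d)%N; have n'_eq : n' = (e * d)%N by rewrite divnK.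
have p_ndvd_em : ~~ (p %| e * m)%N.
  rewrite Euclid_dvdM // negb_or p_ndvd_m andbT -prime_coprime //.
  by rewrite (coprime_dvdr _ p_cop_n') // n'_eq dvdn_mulr.
have em_gt0 : (0 < e * m)%N.
  by case: (posnP (e * m)) p_ndvd_em => // ->; rewrite dvdn0.
have d_gt0 : (0 < d)%N by case: (posnP d) p_ndvd_d => // ->; rewrite dvdn0.
have nm_eq : (n * m = p ^ r * (e * m) * d)%N by rewrite n_eq n'_eq; lia.
have nm_eq' : (n * m = p ^ r.-1 * (e * m) * (p * d))%N.
  by rewrite nm_eq -{1}(prednK r_gt0) expnS; lia.
rewrite !rmorphM !evalC_polyC !evalC_subsq mobius_pmul //.
have pd_gt0 : (0 < p * d)%N by rewrite muln_gt0 prime_gt0.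
rewrite {1}nm_eq nm_eq' !mulnK // [(p * d)%N]mulnC exprM.
rewrite (dwork_congruence_eval (w := z ^+ d) dwork (S_n p p_prime p_dvd_n)
           p_prime em_gt0 r_gt0 p_ndvd_em).
- by rewrite intrN mulNr addrC addNr.
- by rewrite -exprM mulnC -nm_eq.
- rewrite -exprM; apply/eqP => /p_dvd_order.
  by rewrite Euclid_dvdM // (negbTE p_ndvd_d) (negbTE p_ndvd_em).
Qed.

Lemma mobius_of_dwork S a : dwork_congruences S a -> mobius_congruences S a.
Proof.
move=> dwork n m n_gt0 S_n m_gt0 n_cop_m.
apply/(zpdvd_qintP _ n_gt0 m_gt0) => z.
exact: mobius_sum_eval dwork n_gt0 S_n n_cop_m.
Qed.

Theorem theorem8 (S : nat -> Prop) (hSprime : forall p, S p -> prime p)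
  (hSne : exists p, S p) (a : nat -> {poly int}) :
  (forall p m r : nat, S p -> (0 < m)%N -> (0 < r)%N -> ~~ (p %| m)%N ->
     zpdvd (qint (p ^ r) m) (a (p ^ r * m)%N - subsq (a (p ^ r.-1 * m)%N) p))
  <->
  (forall n m : nat, (0 < n)%N -> (forall p, prime p -> (p %| n)%N -> S p) ->
     (0 < m)%N -> coprime n m ->
     zpdvd (qint n m)
       (\sum_(d <- divisors n) (mobius d)%:P * subsq (a (n * m %/ d)%N) d)).
Proof.
split; [exact: mobius_of_dwork | exact: dwork_of_mobius hSprime].
Qed.
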